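(* With notation as in the context (type $E_7$), for every $s\in\{1,3,4,5,6,7\}$: (1) $\Gamma_s^+=\mathcal{L}(z_s)\cap\bigcap_{t\in T,\ s<t\le 7}\mathcal{L}^c(z_t)$; (2) $\Gamma_s^+\oplus z_s=\mathcal{L}(z_7)\cap\bigcap_{t\in T,\ s\le t<7}\mathcal{L}^c(z_t)$, where $T=\{1,3,4,5,6,7\}$ and $\Gamma_s^+\oplus z_s=\{x\oplus z_s: x\in\Gamma_s^+\}$ (empty intersections are omitted).
   Context: Let $F=\{0,1,2,3\}$ be the group $\mathbb{Z}/2\times\mathbb{Z}/2$ with operation $\oplus$ (binary addition without carry) and symplectic form $(a|a')=0$ if $a=0$, $a'=0$ or $a=a'$, and $1$ otherwise. Let $V=F^3$ (elements written $abc$), with coordinatewise $\oplus$ and form $(abc|a'b'c')=(a|a')+(b|b')+(c|c')\in\mathbb{Z}/2$. The T-graph is the graph with vertex set $V$ in which $abc$ and $a'b'c'$ are adjacent iff exactly one of $a=a'$, $b=b'$, $c=c'$ holds. For $v\in V$, $\mathcal{L}(v)$ is the set of vertices adjacent to $v$ in the T-graph, and $\mathcal{L}^c(v)$ is the set of vertices other than $v$ not adjacent to $v$. Let $\Delta$ be the $E_7$ root system with simple roots $\alpha_1,\dots,\alpha_7$, $\langle\alpha_i,\alpha_i\rangle=2$, $\langle\alpha_i,\alpha_j\rangle=-1$ for $\{i,j\}\in\{\{1,3\},\{3,4\},\{4,5\},\{5,6\},\{6,7\},\{2,4\}\}$, $0$ otherwise; $\Lambda=\bigoplus\mathbb{Z}\alpha_i$,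 $\Delta^+$ the positive roots. Let $f:\Lambda\to V$ be the homomorphism with $f(\alpha_1)=100$, $f(\alpha_2)=030$, $f(\alpha_3)=300$, $f(\alpha_4)=111$, $f(\alpha_5)=003$, $f(\alpha_6)=001$, $f(\alpha_7)=033$. For $\beta=\sum\beta^i\alpha_i\in\Delta^+$ let $m(\beta)=\max\{i:\beta^i\ne0\}$; set $\Delta_1^+=\{\alpha_1\}$, $\Delta_3^+=\{\beta: m(\beta)\in\{2,3\}\}$, $\Delta_s^+=\{\beta: m(\beta)=s\}$ for $s=4,\dots,7$, and $\Gamma_s^+=f(\Delta_s^+)$. For $s\in\{1,3,4,5,6,7\}$ let $s'=\max\{3,s+1\}$, $\zeta_s=\sum_{i=s'}^{7}\alpha_i$ (so $\zeta_7=0$), and $z_s=f(\zeta_s)$. *)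

From mathcomp Require Import all_boot all_order all_algebra.
Set Implicit Arguments. Unset Strict Implicit. Unset Printing Implicit Defensive.
Import Order.TTheory GRing.Theory Num.Theory.

(* F = Z/2 x Z/2 encoded as {0,1,2,3}; (+) is binary addition without carry *)
Definition F := 'I_4.
Definition xorF (a b : F) : F := inord (Nat.lxor a b).

(* symplectic form on F (recorded for completeness; not used by the statement) *)
Definition formF (a a' : F) : bool :=
  ~~ [|| (a == 0 :> nat), (a' == 0 :> nat) | a == a'].

(* V = F^3, element abc written (a, b, c) *)
Definition V := (F * F * F)%type.
Definition mkV (a b c : nat) : V := (inord a, inord b, inord c).
Definition xorV (v w : V) : V :=
  (xorF v.1.1 w.1.1, xorF v.1.2 w.1.2, xorF v.2 w.2).
Definition zeroV : V := mkV 0 0 0.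
Definition formV (v w : V) : bool :=
  formF v.1.1 w.1.1 (+) formF v.1.2 w.1.2 (+) formF v.2 w.2.

Definition Tadj (v w : V) : bool :=
  ((v.1.1 == w.1.1) + (v.1.2 == w.1.2) + (v.2 == w.2) == 1)%N.

Definition Lset (v : V) : {set V} := [set w | Tadj v w].
Definition Lcset (v : V) : {set V} := [set w | (w != v) && ~~ Tadj v w].

(* E7 Cartan (Gram) matrix on simple roots alpha_1..alpha_7 (1-based) *)
Definition e7edge (i j : nat) : bool :=
  (i, j) \in [:: (1,3); (3,4); (4,5); (5,6); (6,7); (2,4);
               (3,1); (4,3); (5,4); (6,5); (7,6); (4,2)]%N.
Definition cartan (i j : nat) : int :=
  if i == j then Posz 2 else if e7edge i j then Negz 0 else Posz 0.

(* Lambda = Z^7 : coefficient vectors; beta (i : 'I_7) is the coefficient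
   beta^{i+1} of alpha_{i+1} *)
Definition Lam := {ffun 'I_7 -> int}.
Definition coef (b : Lam) (i : nat) : int :=
  if (0 < i <= 7)%N then b (inord i.-1) else Posz 0.

Definition form (b c : Lam) : int :=
  (\sum_(i < 7) \sum_(j < 7) b i * c j * cartan i.+1 j.+1)%R.

Definition isRoot (b : Lam) : Prop := form b b = Posz 2.
Definition isPosRoot (b : Lam) : Prop := isRoot b /\ forall i, (0 <= b i)%R.

Definition fsimple (i : nat) : V :=
  match i with
  | 1 => mkV 1 0 0 | 2 => mkV 0 3 0 | 3 => mkV 3 0 0 | 4 => mkV 1 1 1
  | 5 => mkV 0 0 3 | 6 => mkV 0 0 1 | 7 => mkV 0 3 3 | _ => zeroV
  end%N.
(* since V has exponent 2, f(sum b^i alpha_i) = xor of f(alpha_i) over odd b^i *)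
Definition fhom (b : Lam) : V :=
  foldr (fun i acc => if odd `|coef b i|%N then xorV (fsimple i) acc else acc)
        zeroV (iota 1 7).

Definition mroot (b : Lam) : nat := \max_(i < 8 | coef b i != Posz 0) i.

Definition alpha1 : Lam := [ffun i : 'I_7 => if val i == 0%N then Posz 1 else Posz 0].
Definition DeltaPos (s : nat) (b : Lam) : Prop :=
  isPosRoot b /\
  (if s == 1%N then b == alpha1
   else if s == 3%N then mroot b \in [:: 2; 3]%N
   else mroot b == s).

Definition Gamma (s : nat) (x : V) : Prop := exists b, DeltaPos s b /\ fhom b = x.

Definition sprime (s : nat) : nat := maxn 3 s.+1.
Definition zeta (s : nat) : Lam :=
  [ffun i : 'I_7 => if (sprime s <= i.+1)%N then Posz 1 else Posz 0].
Definition z (s : nat) : V := fhom (zeta s).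

Definition Tidx : seq nat := [:: 1; 3; 4; 5; 6; 7]%N.

From Pilot Require Import Defs.
From mathcomp Require Import all_boot all_order all_algebra.
From mathcomp Require Import zify ring.
Import Order.TTheory GRing.Theory Num.Theory.

(* Cauchy-Schwarz for the positive definite E7 form, applied to a root b and
   to the fundamental weights (the dual basis of the simple roots), bounds the
   coefficients of every positive root by those of the highest root
   (2,2,3,4,3,2,1).  Hence Delta^+ consists of the vectors of norm 2 in a box
   of 8640 points, and both identities become a finite check over the 64
   points of V, evaluated on coordinates. *)

Local Open Scope ring_scope.

Section CauchySchwarz.
Variables (R : realDomainType) (U : lmodType R) (B : U -> U -> R).
Hypothesis B_linear : forall a x y w, B (a *: x + y) w = a * B x w + B y w.
Hypothesis B_sym : forall x y, B x y = B y x.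
Hypothesis B_psd : forall x, 0 <= B x x.

Lemma cauchy_schwarz x w : 0 < B w w -> B x w ^+ 2 <= B x x * B w w.
Proof.
move=> w_gt0.
have B0 y : B 0 y = 0.
  by have := B_linear (-1) y y y; rewrite scaleN1r addNr mulN1r addNr.
have BB a b u v y : B (a *: u - b *: v) y = a * B u y - b * B v y.
  by rewrite -scaleNr -[_ *: v]addr0 !B_linear B0 addr0 mulNr.
pose v := B w w *: x - B x w *: w.
have Bvv : B v v = B w w * (B x x * B w w - B x w ^+ 2).
  by rewrite {1}/v BB ![B _ v]B_sym !BB (B_sym w x); ring.
by rewrite -subr_ge0 -(pmulr_rge0 _ w_gt0) -Bvv.
Qed.

End CauchySchwarz.

Lemma e7edge_sym i j : e7edge i j = e7edge j i.
Proof.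
rewrite /e7edge -[(j, i)]/(swap_pair (i, j)) -(mem_map (can_inj swap_pairK)).
by apply: perm_mem.
Qed.

Lemma cartan_sym i j : cartan i j = cartan j i.
Proof. by rewrite /cartan eq_sym e7edge_sym. Qed.

Lemma form_sym b c : Defs.form b c = Defs.form c b.
Proof.
rewrite /Defs.form exchange_big; apply: eq_bigr => i _; apply: eq_bigr => j _.
by rewrite (mulrC (b j)) cartan_sym.
Qed.

Lemma form_linear a (x y w : {ffun 'I_7 -> int^o}) :
  Defs.form (a *: x + y) w = a * Defs.form x w + Defs.form y w.
Proof.
rewrite /Defs.form mulr_sumr -big_split; apply: eq_bigr => i _.
rewrite mulr_sumr -big_split; apply: eq_bigr => j _.
by rewrite !ffunE mulrDl mulrDl !mulrA.
Qed.

Definition e7form (v w : seq int) : int :=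
  let x := nth 0 v in let y := nth 0 w in
  2 * (x 0 * y 0 + x 1 * y 1 + x 2 * y 2 + x 3 * y 3
       + x 4 * y 4 + x 5 * y 5 + x 6 * y 6)
  - (x 0 * y 2 + x 2 * y 0 + x 1 * y 3 + x 3 * y 1 + x 2 * y 3 + x 3 * y 2
     + x 3 * y 4 + x 4 * y 3 + x 4 * y 5 + x 5 * y 4 + x 5 * y 6 + x 6 * y 5).

Lemma e7form_ge0 v : 0 <= e7form v v.
Proof.
set x := nth 0 v.
(* completing squares along the Dynkin diagram (an LDL^T factorisation) *)
have sos : 60 * e7form v v =
    30 * (2 * x 0 - x 2) ^+ 2 + 30 * (2 * x 1 - x 3) ^+ 2
  + 10 * (3 * x 2 - 2 * x 3) ^+ 2 + 2 * (5 * x 3 - 6 * x 4) ^+ 2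
  + 3 * (4 * x 4 - 5 * x 5) ^+ 2 + 5 * (3 * x 5 - 4 * x 6) ^+ 2 + 40 * x 6 ^+ 2.
  by rewrite /e7form -/x; ring.
rewrite -(pmulr_rge0 _ (isT : (0 : int) < 60)) sos.
by rewrite !addr_ge0 // mulr_ge0 // sqr_ge0.
Qed.

Definition coords (b : Lam) : seq int := [seq b (inord k) | k <- iota 0 7].
Definition lam_of (v : seq int) : Lam := [ffun i : 'I_7 => nth 0 v i].

Lemma lam_of_coords : cancel coords lam_of.
Proof.
move=> b; apply/ffunP => i.
by rewrite ffunE (nth_map 0%N) ?size_iota // nth_iota // inord_val.
Qed.

Lemma coords_inj : injective coords.
Proof. exact: can_inj lam_of_coords. Qed.

Lemma coords_lam_of v : size v = 7%N -> coords (lam_of v) = v.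
Proof.
do 7 (case: v => [|? v] //); case: v => // _.
by rewrite /coords /= !ffunE !inordK.
Qed.

Lemma form_lam_ofE v w : Defs.form (lam_of v) (lam_of w) = e7form v w.
Proof.
rewrite /Defs.form !big_ord_recr !big_ord0 /= !ffunE /cartan /e7edge /= /e7form.
ring.
Qed.

Lemma form_ge0 b : 0 <= Defs.form b b.
Proof. by rewrite -[b]lam_of_coords form_lam_ofE e7form_ge0. Qed.

(* Rows of the inverse Cartan matrix (the fundamental weights), doubled for
   alpha_2, alpha_5, alpha_7 to clear denominators. *)
Definition weight_scale : seq int := [:: 1; 2; 1; 1; 2; 1; 2].
Definition weights : seq (seq int) :=
  [:: [:: 2; 2; 3; 4; 3; 2; 1]; [:: 4; 7; 8; 12; 9; 6; 3]; [:: 3; 4; 6; 8; 6; 4; 2];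
      [:: 4; 6; 8; 12; 9; 6; 3]; [:: 6; 9; 12; 18; 15; 10; 5]; [:: 2; 3; 4; 6; 5; 4; 2];
      [:: 2; 3; 4; 6; 5; 4; 3]].
Definition weight (i : 'I_7) : Lam := lam_of (nth [::] weights i).

Lemma form_weight b i : Defs.form b (weight i) = nth 0 weight_scale i * b i.
Proof.
rewrite -[b]lam_of_coords form_lam_ofE ffunE.
by case: i => [[|[|[|[|[|[|[|//]]]]]]] ?]; rewrite /e7form /=; ring.
Qed.

Definition highest : seq nat := [:: 2; 2; 3; 4; 3; 2; 1].

Lemma pos_root_coef_le b i : isPosRoot b -> b i <= (nth 0 highest i)%:Z.
Proof.
case=> root_b b_ge0.
have := @cauchy_schwarz _ _ _ form_linear form_sym form_ge0 b (weight i).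
rewrite root_b !form_weight; move: (b_ge0 i).
case: i => [[|[|[|[|[|[|[|//]]]]]]] ?]; rewrite /weight ffunE /=; nia.
Qed.

Fixpoint seqs_le (ms : seq nat) : seq (seq nat) :=
  if ms is m :: ms' then [seq a :: l | a <- iota 0 m.+1, l <- seqs_le ms']
  else [:: [::]].

Lemma mem_seqs_le ms l :
  size l = size ms -> all2 leq l ms -> l \in seqs_le ms.
Proof.
elim: ms l => [|m ms IH] [|a l] //= [size_l] /andP[a_le l_le].
change (a :: l \in seqs_le (m :: ms)); apply/allpairsPdep; exists a, l.
by split=> //; [rewrite mem_iota ltnS a_le | exact: IH size_l l_le].
Qed.

Lemma size_seqs_le ms l : l \in seqs_le ms -> size l = size ms.
Proof.
elim: ms l => [|m ms IH] l; first by rewrite inE => /eqP ->.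
by case/allpairsPdep => a [l' [_ /IH size_l' ->]]; rewrite /= size_l'.
Qed.

Definition pos_roots : seq (seq int) :=
  [seq v <- map (map Posz) (seqs_le highest) | e7form v v == 2].

Lemma coords_pos_root b : isPosRoot b -> coords b \in pos_roots.
Proof.
move=> root_b; have [norm_b b_ge0] := root_b.
rewrite mem_filter -form_lam_ofE lam_of_coords norm_b eqxx andTb.
have -> : coords b = map Posz [seq `|b (inord k)|%N | k <- iota 0 7].
  by rewrite -map_comp; apply: eq_map => k /=; rewrite gez0_abs.
apply: map_f; apply: mem_seqs_le; first by rewrite size_map size_iota.
have le_highest k : (k < 7)%N -> (`|b (inord k)| <= nth 0 highest k)%N.
  move=> lt_k7; rewrite -lez_nat gez0_abs //.
  by rewrite -[X in nth _ _ X](inordK lt_k7) pos_root_coef_le.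
by rewrite /= !le_highest.
Qed.

Lemma lam_of_pos_root v :
  v \in pos_roots -> isPosRoot (lam_of v) /\ coords (lam_of v) = v.
Proof.
rewrite mem_filter => /andP[/eqP norm_v /mapP[l /size_seqs_le size_l v_def]].
have size_v : size v = 7%N by rewrite v_def size_map size_l.
split; last exact: coords_lam_of.
split; first by rewrite /isRoot form_lam_ofE.
move=> i; rewrite ffunE v_def (nth_map 0%N) // size_l.
exact: ltn_ord.
Qed.

Definition mroot_seq (v : seq int) : nat :=
  foldl maxn 0 [seq if nth 0 v k.-1 != 0 then k else 0%N | k <- iota 1 7].

Lemma mroot_coords b : mroot b = mroot_seq (coords b).
Proof. by rewrite /mroot big_mkcond !big_ord_recr big_ord0 /= /coef /= max0n. Qed.

Lemma coords_alpha1 : coords alpha1 = [:: 1; 0; 0; 0; 0; 0; 0].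
Proof. by rewrite /coords /= !ffunE /= !inordK. Qed.

Definition in_Delta (s : nat) (v : seq int) : bool :=
  if s == 1%N then v == [:: 1; 0; 0; 0; 0; 0; 0]
  else if s == 3%N then mroot_seq v \in [:: 2; 3]%N
  else mroot_seq v == s.

Lemma DeltaPos_coords s b : DeltaPos s b <-> isPosRoot b /\ in_Delta s (coords b).
Proof.
by rewrite /DeltaPos /in_Delta mroot_coords -coords_alpha1 (inj_eq coords_inj).
Qed.

(* [inord] does not reduce under [vm_compute], so points of V are computed on
   through the values of their coordinates. *)
Definition Vn := (nat * nat * nat)%type.
Definition coordV (x : V) : Vn := (val x.1.1, val x.1.2, val x.2).
Definition xorn (u w : Vn) : Vn :=
  (Nat.lxor u.1.1 w.1.1, Nat.lxor u.1.2 w.1.2, Nat.lxor u.2 w.2).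
Definition fsimple_n (i : nat) : Vn :=
  match i with
  | 1 => (1, 0, 0) | 2 => (0, 3, 0) | 3 => (3, 0, 0) | 4 => (1, 1, 1)
  | 5 => (0, 0, 3) | 6 => (0, 0, 1) | 7 => (0, 3, 3) | _ => (0, 0, 0)
  end%N.
Definition fhom_n (v : seq int) : Vn :=
  foldr (fun i acc => if odd `|nth 0 v i.-1| then xorn (fsimple_n i) acc else acc)
        (0, 0, 0)%N (iota 1 7).
Definition Tadj_n (u w : Vn) : bool :=
  ((u.1.1 == w.1.1) + (u.1.2 == w.1.2) + (u.2 == w.2) == 1)%N.

Lemma coordV_inj : injective coordV.
Proof.
by move=> [[a b] c] [[a' b'] c'] [] /val_inj-> /val_inj-> /val_inj->.
Qed.

Lemma coordV_xor u w : coordV (xorV u w) = xorn (coordV u) (coordV w).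
Proof.
have val_xorF (a b : F) : val (xorF a b) = Nat.lxor a b.
  rewrite /xorF /= inordK //.
  by case: a => [[|[|[|[|//]]]] ?]; case: b => [[|[|[|[|//]]]] ?].
by rewrite /coordV /= !val_xorF.
Qed.

Lemma coordV_fsimple i : coordV (fsimple i) = fsimple_n i.
Proof.
by do 8 (case: i => [|i]; first by rewrite /coordV /= !inordK);
  rewrite /coordV /= !inordK.
Qed.

Lemma coef_coords b i : (0 < i <= 7)%N -> coef b i = nth 0 (coords b) i.-1.
Proof.
move=> i_range; rewrite /coef i_range; case: i i_range => // i /andP[_ lt_i7].
by rewrite (nth_map 0%N) ?size_iota // nth_iota.
Qed.

Lemma coordV_fhom b : coordV (fhom b) = fhom_n (coords b).
Proof.
rewrite /fhom /fhom_n.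
have : all (fun i => 0 < i <= 7)%N (iota 1 7) by [].
elim: (iota 1 7) => [|i l IH] /=; first by rewrite /coordV /= !inordK.
case/andP => /coef_coords -> /IH <-.
by case: ifP; rewrite ?coordV_xor ?coordV_fsimple.
Qed.

Lemma Tadj_coordV u w : Tadj u w = Tadj_n (coordV u) (coordV w).
Proof. by []. Qed.

Definition zeta_seq (t : nat) : seq int :=
  [seq if (sprime t <= k.+1)%N then 1 else 0 | k <- iota 0 7].
Definition z_n (t : nat) : Vn := fhom_n (zeta_seq t).

Lemma coordV_z t : coordV (z t) = z_n t.
Proof.
rewrite /z coordV_fhom; congr fhom_n; apply/eq_in_map => k.
by rewrite mem_iota => /andP[_ lt_k7]; rewrite ffunE inordK.
Qed.

Lemma Lset_coordV t x : (x \in Lset (z t)) = Tadj_n (z_n t) (coordV x).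
Proof. by rewrite inE Tadj_coordV coordV_z. Qed.

Definition Lc_n (u y : Vn) : bool := (y != u) && ~~ Tadj_n u y.

Lemma Lcset_coordV t x : (x \in Lcset (z t)) = Lc_n (z_n t) (coordV x).
Proof. by rewrite inE Tadj_coordV -(inj_eq coordV_inj) coordV_z. Qed.

Lemma all_implyP (T : eqType) (s : seq T) (P Q : pred T) :
  reflect (forall t, t \in s -> P t -> Q t) (all (fun t => P t ==> Q t) s).
Proof. by apply: (iffP allP) => PQ t /PQ; [move/implyP | move/implyP]. Qed.

Definition LcapLc_n (u : nat) (P : pred nat) (y : Vn) : bool :=
  Tadj_n (z_n u) y && all (fun t => P t ==> Lc_n (z_n t) y) Tidx.

Lemma LcapLc_coordV u (P : pred nat) x :
  (x \in Lset (z u) /\ forall t, t \in Tidx -> P t -> x \in Lcset (z t))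
  <-> LcapLc_n u P (coordV x).
Proof.
rewrite /LcapLc_n -Lset_coordV.
split=> [[-> Lc_x] | /andP[-> /all_implyP Lc_x]].
  by rewrite andTb; apply/all_implyP => t Tt Pt; rewrite -Lcset_coordV Lc_x.
by split=> // t Tt Pt; rewrite Lcset_coordV Lc_x.
Qed.

Definition Gamma_n (s : nat) : seq Vn :=
  [seq fhom_n v | v <- pos_roots & in_Delta s v].

Lemma mem_Gamma_n s y : y \in Gamma_n s -> exists2 x, Gamma s x & coordV x = y.
Proof.
case/mapP => v; rewrite mem_filter => /andP[Dv /lam_of_pos_root[root_v vE]] ->.
exists (fhom (lam_of v)); last by rewrite coordV_fhom vE.
by exists (lam_of v); split=> //; apply/DeltaPos_coords; rewrite vE.
Qed.

Lemma Gamma_coordV s x : Gamma s x <-> coordV x \in Gamma_n s.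
Proof.
split=> [[b [/DeltaPos_coords[root_b Db] <-]] | /mem_Gamma_n[y Gy /coordV_inj <- //]].
by rewrite coordV_fhom; apply: map_f; rewrite mem_filter Db coords_pos_root.
Qed.

Lemma shifted_Gamma_coordV s x :
  (exists y, Gamma s y /\ x = xorV y (z s)) <->
  coordV x \in [seq xorn y (z_n s) | y <- Gamma_n s].
Proof.
split=> [[y [/Gamma_coordV Gy ->]] | /mapP[_ /mem_Gamma_n[y Gy <-] xE]].
  by rewrite coordV_xor coordV_z; apply: map_f.
by exists y; split=> //; apply: coordV_inj; rewrite coordV_xor coordV_z.
Qed.

Definition Vn_all : seq Vn :=
  [seq (ab, c) | ab <- [seq (a, b) | a <- iota 0 4, b <- iota 0 4], c <- iota 0 4].

Lemma mem_Vn_all x : coordV x \in Vn_all.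
Proof.
have in_iota4 (a : F) : val a \in iota 0 4 by rewrite mem_iota ltn_ord.
case: x => [[a b] c]; apply/allpairsPdep; exists (val a, val b), (val c).
by split=> //; apply/allpairsPdep; exists (val a), (val b).
Qed.

Definition Gamma_table (s : nat) : bool :=
  all (fun y =>
    ((y \in Gamma_n s) == LcapLc_n s (fun t => s < t <= 7)%N y)
    && ((y \in [seq xorn y (z_n s) | y <- Gamma_n s])
        == LcapLc_n 7 (fun t => s <= t < 7)%N y))
  Vn_all.

Lemma Gamma_table_ok : all Gamma_table Tidx.
Proof. by vm_compute. Qed.

Theorem mainTheorem8 : forall s : nat, s \in Tidx ->
  (forall x : V,
     Gamma s x <->
     (x \in Lset (z s) /\
      forall t, t \in Tidx -> (s < t <= 7)%N -> x \in Lcset (z t))) /\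
  (forall x : V,
     (exists y, Gamma s y /\ x = xorV y (z s)) <->
     (x \in Lset (z 7) /\
      forall t, t \in Tidx -> (s <= t < 7)%N -> x \in Lcset (z t))).
Proof.
move=> s Ts; have /allP table_s := allP Gamma_table_ok s Ts.
split=> x; have /andP[/eqP GammaE /eqP shiftedE] := table_s _ (mem_Vn_all x).
  apply: iff_trans (Gamma_coordV s x) _; rewrite GammaE.
  exact: iff_sym (LcapLc_coordV _ _ _).
apply: iff_trans (shifted_Gamma_coordV s x) _; rewrite shiftedE.
exact: iff_sym (LcapLc_coordV _ _ _).
Qed.
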